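(* Let $q$ be a prime power, $2\le n\le m$, and $\mathcal{C}\subseteq\mathrm{Mat}$ a non-zero rank-metric code of minimum distance $d$. The following are equivalent: (1) $\mathcal{C}$ is MRD; (2) $\rho_{\mathrm c}(\mathcal{C},J)=\dim(J)$ for all subspaces $J\subseteq\mathbb{F}_q^n$ with $\dim(J)\le n-d+1$; (3) $\rho_{\mathrm c}(\mathcal{C},J)=\dim(J)$ for some subspace $J\subseteq\mathbb{F}_q^n$ with $\dim(J)=n-d+1$.
   Context: $\mathrm{Mat}$ is the $\mathbb{F}_q$-space of $n\times m$ matrices over $\mathbb{F}_q$; a rank-metric code is an $\mathbb{F}_q$-linear subspace, with minimum distance $d(\mathcal{C})=\min\{\mathrm{rk}(M)\mid M\in\mathcal{C},M\ne0\}$. A non-zero code with minimum distance $d$ satisfies $\dim\mathcal{C}\le m(n-d+1)$, and is MRD if equality holds. For a subspace $J\subseteq\mathbb{F}_q^n$, $\mathcal{C}(J,\mathrm c)=\{M\in\mathcal{C}\mid\mathrm{colsp}(M)\subseteq J\}$ and $\rho_{\mathrm c}(\mathcal{C},J)=(\dim\mathcal{C}-\dim\mathcal{C}(J^\perp,\mathrm c))/m$, with $J^\perp$ the orthogonal complement for the standard inner product. *)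

From HB Require Import structures.
From mathcomp Require Import all_boot all_order all_algebra all_field.
Set Implicit Arguments. Unset Strict Implicit. Unset Printing Implicit Defensive.
Import Order.TTheory GRing.Theory Num.Theory.
Local Open Scope ring_scope.

(* Rank-metric codes: F is the finite field F_q (q = #|F|), matrices are
   n x m over F, a code is an F-subspace of 'M[F]_(n,m). Vectors of F^n are
   represented as row vectors 'rV[F]_n. *)

(* Minimum distance: min rank of a non-zero codeword (n if no such codeword). *)
Definition mindist (F : finFieldType) (n m : nat) (C : {vspace 'M[F]_(n, m)}) : nat :=
  \big[minn/n]_(M : 'M[F]_(n, m) | (M \in C) && (M != 0%R)) \rank M.

Definition MRD (F : finFieldType) (n m : nat) (C : {vspace 'M[F]_(n, m)}) : Prop :=
  \dim C = (m * (n - mindist C + 1))%N.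

Definition colsp_sub (F : finFieldType) (n m : nat) (M : 'M[F]_(n, m))
  (J : {vspace 'rV[F]_n}) : bool :=
  [forall j : 'I_m, (col j M)^T \in J].

Definition perp (F : finFieldType) (n : nat) (J : {vspace 'rV[F]_n}) : {vspace 'rV[F]_n} :=
  <<[seq v <- enum 'rV[F]_n | [forall u : 'rV[F]_n, (u \in J) ==> (u *m v^T == 0%R)]]>>%VS.

Definition subcode_c (F : finFieldType) (n m : nat) (C : {vspace 'M[F]_(n, m)})
  (J : {vspace 'rV[F]_n}) : {vspace 'M[F]_(n, m)} :=
  <<[seq M <- enum 'M[F]_(n, m) | (M \in C) && colsp_sub M J]>>%VS.

Definition rho_c (F : finFieldType) (n m : nat) (C : {vspace 'M[F]_(n, m)})
  (J : {vspace 'rV[F]_n}) : rat :=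
  (((\dim C)%:R - (\dim (subcode_c C (perp J)))%:R) / m%:R)%R.

From HB Require Import structures.
From mathcomp Require Import all_boot all_order all_algebra all_field.
From mathcomp Require Import zify.

Set Implicit Arguments.
Unset Strict Implicit.
Unset Printing Implicit Defensive.
Import Order.TTheory GRing.Theory Num.Theory.
Local Open Scope ring_scope.

(* Write S(J) for C(J^perp, c), the codewords M of C with x M = 0 for all
   x in J; then rho_c(C, J) = dim J says exactly dim C = dim S(J) + m dim J.
   Each vector added to J imposes at most m linear conditions on S(J), so
   dim S(J) <= dim S(J + W) + m dim W, and in particular
   dim C <= dim S(J) + m dim J. A codeword of S(J') has rank at most
   n - dim J', so S(J') = 0 as soon as dim J' >= n - d + 1. Extending J to
   such a J' of dimension exactly n - d + 1 therefore sandwiches dim S(J)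
   between dim C - m dim J and m (n - d + 1 - dim J), and these meet exactly
   when C attains the Singleton bound dim C = m (n - d + 1). *)

Lemma span_ind (K : fieldType) (vT : vectType K) (P : vT -> Prop) (s : seq vT) :
  P 0 -> (forall a u v, P u -> P v -> P (a *: u + v)) ->
  (forall x, x \in s -> P x) -> forall v, v \in <<s>>%VS -> P v.
Proof.
move=> P0 PD Ps v vs; rewrite (@coord_span _ _ _ (in_tuple s) v vs).
apply: (big_ind P) => //.
  by move=> x y Px Py; rewrite -[x]scale1r; apply: PD.
move=> i _; rewrite -[_ *: _]addr0; apply: PD => //; apply: Ps.
by rewrite mem_nth // size_tuple.
Qed.

Lemma exists_subspace_extension (K : fieldType) (vT : vectType K)
    (U : {vspace vT}) (k : nat) :
  (\dim U <= k <= \dim {:vT})%N ->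
  exists2 W : {vspace vT}, \dim W = (k - \dim U)%N & \dim (U + W) = k.
Proof.
move=> /andP[Uk kT]; set r := (k - \dim U)%N.
have dimUC : \dim U^C = (\dim {:vT} - \dim U)%N by rewrite dimv_compl.
set X := take r (vbasis U^C).
have sizeX : size X = r by rewrite size_takel // size_tuple dimUC; lia.
have freeX : free X.
  apply: (@catl_free _ _ (drop r (vbasis U^C))).
  by rewrite cat_take_drop (basis_free (vbasisP _)).
have dimX : \dim <<X>> = r by rewrite (eqP freeX).
have capUX : (U :&: <<X>> = 0)%VS.
  apply/eqP; rewrite -subv0 -(capv_compl U) capvS //.
  by apply/span_subvP => x /mem_take /vbasis_mem.
exists <<X>>%VS => //.
by have := dimv_sum_cap U <<X>>; rewrite capUX dimv0 dimX addn0 => ->; lia.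
Qed.

Lemma rank_add_dim_annihilator (K : fieldType) (n m : nat)
    (J : {vspace 'rV[K]_n}) (M : 'M[K]_(n, m)) :
  (forall x, x \in J -> x *m M = 0) -> (\rank M + \dim J <= n)%N.
Proof.
move=> JM; set X := vbasis J.
pose A : 'M[K]_(\dim J, n) := \matrix_(i < \dim J) X`_i.
have AM : A *m M = 0.
  apply/row_matrixP => i; rewrite row_mul rowK row0; apply/JM/vbasis_mem.
  by rewrite mem_nth // size_tuple.
have freeA : row_free A.
  rewrite -kermx_eq0; apply/rowV0P => w /sub_kermxP.
  rewrite mulmx_sum_row => wA; apply/rowP => i; rewrite mxE.
  apply: (freeP (basis_free (vbasisP J)) (fun i => w 0 i) _ i).
  by rewrite -[RHS]wA; apply: eq_bigr => j _; rewrite rowK.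
by rewrite addnC -(eqP freeA); apply: mulmx0_rank_max.
Qed.

Section Subcodes.

Variables (F : finFieldType) (n : nat).

Lemma mem_perp (J : {vspace 'rV[F]_n}) u :
  u \in perp J <-> (forall x, x \in J -> x *m u^T = 0).
Proof.
split=> [uJ x xJ|Ju].
  move: u uJ; apply: span_ind.
  - by rewrite trmx0 mulmx0.
  - move=> a u v xu xv.
    by rewrite linearD linearZ /= mulmxDr -scalemxAr xu xv scaler0 addr0.
  - by move=> y; rewrite mem_filter => /andP[/forallP/(_ x)/implyP/(_ xJ)/eqP].
apply: memv_span; rewrite mem_filter mem_enum andbT.
by apply/forallP => x; apply/implyP => xJ; rewrite Ju.
Qed.

Variables (m : nat) (C : {vspace 'M[F]_(n, m)}).

Lemma mem_subcode_c (J : {vspace 'rV[F]_n}) M :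
  M \in subcode_c C J <-> M \in C /\ forall j, (col j M)^T \in J.
Proof.
split=> [|[CM MJ]].
  move: M; apply: span_ind.
  - by split=> [|j]; rewrite ?mem0v // !linear0 mem0v.
  - move=> a u v [Cu Ju] [Cv Jv]; split=> [|j]; first by rewrite memvD ?memvZ.
    by rewrite !linearD !linearZ /= memvD ?memvZ.
  - by move=> M; rewrite mem_filter => /andP[/andP[CM /forallP]].
by apply: memv_span; rewrite mem_filter mem_enum andbT CM; apply/forallP.
Qed.

Lemma mem_subcode_perp (J : {vspace 'rV[F]_n}) M :
  M \in subcode_c C (perp J) <-> M \in C /\ forall x, x \in J -> x *m M = 0.
Proof.
rewrite mem_subcode_c; split=> -[CM MJ]; split=> //.
  move=> x xJ; apply/matrixP => i j; rewrite ord1.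
  have /mem_perp/(_ x xJ) := MJ j; rewrite trmxK colE mulmxA -colE.
  by move=> /matrixP/(_ 0 0); rewrite !mxE.
by move=> j; apply/mem_perp => x xJ; rewrite trmxK colE mulmxA MJ // mul0mx.
Qed.

Lemma subcode_perp_sub (J : {vspace 'rV[F]_n}) : (subcode_c C (perp J) <= C)%VS.
Proof. by apply/subvP => M /mem_subcode_perp[]. Qed.

Lemma subcode_perp0 : subcode_c C (perp 0) = C.
Proof.
apply/eqP; rewrite eqEsubv subcode_perp_sub; apply/subvP => M CM.
by apply/mem_subcode_perp; split=> // x; rewrite memv0 => /eqP ->; rewrite mul0mx.
Qed.

Lemma dim_subcode_perp_addv_line (J : {vspace 'rV[F]_n}) v :
  (\dim (subcode_c C (perp J)) <= \dim (subcode_c C (perp (J + <[v]>))) + m)%N.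
Proof.
pose f : 'Hom('M[F]_(n, m), 'rV[F]_m) := linfun (mulmx v).
rewrite -(limg_ker_dim f (subcode_c C (perp J))) leq_add //.
  apply/dimvS/subvP => M /memv_capP[/mem_subcode_perp[CM JM]].
  rewrite memv_ker lfunE /= => /eqP vM; apply/mem_subcode_perp; split=> //.
  move=> _ /memv_addP[x xJ [_ /vlineP[a ->] ->]].
  by rewrite mulmxDl -scalemxAl JM // vM scaler0 addr0.
by rewrite (leq_trans (dimvS (subvf _))) // dimvf dim_matrix mul1r.
Qed.

Lemma dim_subcode_perp_addv_span (s : seq 'rV[F]_n) (J : {vspace 'rV[F]_n}) :
  (\dim (subcode_c C (perp J))
     <= \dim (subcode_c C (perp (J + <<s>>))) + m * size s)%N.
Proof.
elim: s J => [|v s IHs] J; first by rewrite span_nil addv0 muln0 addn0.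
apply: leq_trans (dim_subcode_perp_addv_line J v) _.
by rewrite span_cons addvA mulnS addnA addnAC leq_add2r; apply: IHs.
Qed.

Lemma dim_subcode_perp_addv (J W : {vspace 'rV[F]_n}) :
  (\dim (subcode_c C (perp J))
     <= \dim (subcode_c C (perp (J + W))) + m * \dim W)%N.
Proof.
have := dim_subcode_perp_addv_span (vbasis W) J.
by rewrite (span_basis (vbasisP W)) size_tuple.
Qed.

Lemma dim_code_le_subcode_perp (J : {vspace 'rV[F]_n}) :
  (\dim C <= \dim (subcode_c C (perp J)) + m * \dim J)%N.
Proof. by have := dim_subcode_perp_addv 0 J; rewrite subcode_perp0 add0v. Qed.

Lemma mindist_le_rank M : M \in C -> M != 0 -> (mindist C <= \rank M)%N.
Proof.
move=> CM M0; rewrite /mindist -minEnat.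
by apply: (bigmin_le_cond n (j := M)); rewrite CM.
Qed.

Lemma mindist_le_dim : (mindist C <= n)%N.
Proof. by rewrite /mindist -minEnat; exact: (bigmin_le_id (T := nat)). Qed.

Lemma mindist_gt0 : (0 < n)%N -> (0 < mindist C)%N.
Proof.
move=> n_gt0; rewrite /mindist -minEnat; apply: (le_bigmin (T := nat)) => // M.
by case/andP=> _; rewrite -mxrank_eq0 -lt0n.
Qed.

Lemma subcode_perp_eq0 (J : {vspace 'rV[F]_n}) :
  (n - mindist C + 1 <= \dim J)%N -> subcode_c C (perp J) = 0%VS.
Proof.
move=> dimJ; apply/vspaceP => M; rewrite memv0.
apply/idP/eqP => [/mem_subcode_perp[CM JM]|->]; last exact: mem0v.
(* The ascription restates the lemma over F's own field structure, so that
   lia sees the same atoms \rank M and \dim J as in the other hypotheses. *)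
have rankM : (\rank M + \dim J <= n)%N by exact: rank_add_dim_annihilator.
have [//|M0] := eqVneq M 0.
by have := mindist_le_rank CM M0; have := mindist_le_dim; lia.
Qed.

Lemma rho_c_eq_dimP (J : {vspace 'rV[F]_n}) : (0 < m)%N ->
  rho_c C J = (\dim J)%:R <->
  \dim C = (\dim (subcode_c C (perp J)) + m * \dim J)%N.
Proof.
move=> m_gt0; have m0 : (m%:R : rat) != 0 by rewrite pnatr_eq0 -lt0n.
have dimS := dimvS (subcode_perp_sub J).
rewrite /rho_c -natrB //; split=> [rhoJ|dimC].
  have /eqP : ((\dim C - \dim (subcode_c C (perp J)))%N%:R : rat)
                = (m * \dim J)%N%:R.
    by rewrite natrM mulrC -rhoJ divfK.
  by rewrite eqr_nat => /eqP; lia.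
by rewrite dimC addKn natrM mulrC mulKf.
Qed.

End Subcodes.

Section MRDCharacterization.

Variables (F : finFieldType) (n m : nat) (C : {vspace 'M[F]_(n, m)}).

Let k := (n - mindist C + 1)%N.

Lemma singleton_bound_le_dim : (0 < n)%N -> (k <= n)%N.
Proof. by move=> n_gt0; have := mindist_gt0 C n_gt0; rewrite /k; lia. Qed.

Lemma MRD_rho_c (J : {vspace 'rV[F]_n}) : (0 < n)%N -> (0 < m)%N ->
  MRD C -> (\dim J <= k)%N -> rho_c C J = (\dim J)%:R.
Proof.
rewrite /MRD -/k => n_gt0 m_gt0 dimC dimJ; apply/(rho_c_eq_dimP C J m_gt0).
have [W dimW dimJW] : exists2 W : {vspace 'rV[F]_n},
    \dim W = (k - \dim J)%N & \dim (J + W) = k.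
  apply: exists_subspace_extension.
  by rewrite dimJ dimvf dim_matrix mul1r singleton_bound_le_dim.
have := dim_subcode_perp_addv C J W.
rewrite (subcode_perp_eq0 (J := J + W)) ?dimJW // dimW dimv0.
have := dim_code_le_subcode_perp C J; rewrite dimC mulnBr.
have : (m * \dim J <= m * k)%N by rewrite leq_mul2l dimJ orbT.
lia.
Qed.

Lemma exists_dim_rho_c : (0 < n)%N ->
  (forall J : {vspace 'rV[F]_n}, (\dim J <= k)%N -> rho_c C J = (\dim J)%:R) ->
  exists J : {vspace 'rV[F]_n}, \dim J = k /\ rho_c C J = (\dim J)%:R.
Proof.
move=> n_gt0 rhoC.
have dimk : (\dim (0 : {vspace 'rV[F]_n}) <= k <= \dim {:'rV[F]_n})%N.
  by rewrite dimv0 dimvf dim_matrix mul1r singleton_bound_le_dim.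
have [J _ dimJ] := exists_subspace_extension dimk; rewrite add0v in dimJ.
by exists J; split=> //; apply: rhoC; rewrite dimJ.
Qed.

Lemma rho_c_MRD (J : {vspace 'rV[F]_n}) : (0 < m)%N ->
  \dim J = k -> rho_c C J = (\dim J)%:R -> MRD C.
Proof.
rewrite /MRD => m_gt0 dimJ /(rho_c_eq_dimP C J m_gt0) ->.
by rewrite subcode_perp_eq0 ?dimJ // dimv0.
Qed.

End MRDCharacterization.

Theorem theorem5p4 (F : finFieldType) (n m : nat) (C : {vspace 'M[F]_(n, m)}) :
  (2 <= n)%N -> (n <= m)%N -> C != 0%VS ->
  [/\ (MRD C <->
       (forall J : {vspace 'rV[F]_n},
          (\dim J <= n - mindist C + 1)%N -> rho_c C J = (\dim J)%:R)),
      ((forall J : {vspace 'rV[F]_n},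
          (\dim J <= n - mindist C + 1)%N -> rho_c C J = (\dim J)%:R) <->
       (exists J : {vspace 'rV[F]_n},
          \dim J = (n - mindist C + 1)%N /\ rho_c C J = (\dim J)%:R))
    & ((exists J : {vspace 'rV[F]_n},
          \dim J = (n - mindist C + 1)%N /\ rho_c C J = (\dim J)%:R) <-> MRD C)].
Proof.
move=> n_ge2 n_le_m _.
have n_gt0 : (0 < n)%N by lia.
have m_gt0 : (0 < m)%N by lia.
have one_two J := @MRD_rho_c F n m C J n_gt0 m_gt0.
have two_three := @exists_dim_rho_c F n m C n_gt0.
have three_one : (exists J : {vspace 'rV[F]_n},
    \dim J = (n - mindist C + 1)%N /\ rho_c C J = (\dim J)%:R) -> MRD C.
  by case=> J [dimJ]; apply: rho_c_MRD.
split; split.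
- by move=> MRD_C J; apply: one_two.
- by move/two_three/three_one.
- exact: two_three.
- by move/three_one=> MRD_C J; apply: one_two.
- exact: three_one.
- by move=> MRD_C; apply: two_three => J; apply: one_two.
Qed.
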